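(* Let $(X,d)$ be a metric space. There exists $\alpha\in(0,1)$ such that $(X,d^\alpha)$ admits an isometric embedding into some finite-dimensional normed linear space if and only if $X$ is finite.
   Context: For a metric space $(X,d)$ and $\alpha\in(0,1)$, $d^\alpha$ denotes the metric $(x,y)\mapsto d(x,y)^\alpha$. *)

From Stdlib Require Import Reals List.
Open Scope R_scope.

Definition is_metric {X : Type} (d : X -> X -> R) : Prop :=
  (forall x y, 0 <= d x y) /\
  (forall x y, d x y = 0 <-> x = y) /\
  (forall x y, d x y = d y x) /\
  (forall x y z, d x z <= d x y + d y z).

(* t^a for t >= 0, with the convention 0^a = 0 (a > 0).
   (Stdlib's Rpower 0 a = 1, so the case t = 0 is handled separately.) *)
Definition rpow_nonneg (t a : R) : R :=
  match Rle_dec t 0 with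
  | left _ => 0
  | right _ => Rpower t a
  end.

Record NormedSpace : Type := {
  ns_car :> Type;
  ns_add : ns_car -> ns_car -> ns_car;
  ns_zero : ns_car;
  ns_opp : ns_car -> ns_car;
  ns_scal : R -> ns_car -> ns_car;
  ns_norm : ns_car -> R;
  ns_add_assoc : forall u v w, ns_add u (ns_add v w) = ns_add (ns_add u v) w;
  ns_add_comm : forall u v, ns_add u v = ns_add v u;
  ns_add_zero : forall u, ns_add u ns_zero = u;
  ns_add_opp : forall u, ns_add u (ns_opp u) = ns_zero;
  ns_scal_one : forall u, ns_scal 1 u = u;
  ns_scal_assoc : forall a b u, ns_scal a (ns_scal b u) = ns_scal (a * b) u;
  ns_scal_distr_l : forall a u v, ns_scal a (ns_add u v) = ns_add (ns_scal a u) (ns_scal a v);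
  ns_scal_distr_r : forall a b u, ns_scal (a + b) u = ns_add (ns_scal a u) (ns_scal b u);
  ns_norm_eq0 : forall u, ns_norm u = 0 -> u = ns_zero;
  ns_norm_scal : forall a u, ns_norm (ns_scal a u) = Rabs a * ns_norm u;
  ns_norm_triangle : forall u v, ns_norm (ns_add u v) <= ns_norm u + ns_norm v
}.

Fixpoint lincomb (N : NormedSpace) (cs : list R) (l : list N) : N :=
  match cs, l with
  | a :: cs', x :: l' => ns_add N (ns_scal N a x) (lincomb N cs' l')
  | _, _ => ns_zero N
  end.

Definition finite_dimensional (N : NormedSpace) : Prop :=
  exists l : list N, forall v : N, exists cs : list R, v = lincomb N cs l.

Definition finite_type (X : Type) : Prop :=
  exists l : list X, forall x : X, In x l.

(** Let [p = 1/alpha > 1].  In coordinates, the image of [X] is a set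
    [E] in which [nu (a - c)^p <= nu (a - b)^p + nu (b - c)^p].  If [X] is infinite, [E]
    contains a sequence of distinct points that either converges to some [V] or escapes
    to infinity from a base point [O]; by compactness of the unit sphere, a subsequence
    of the directions from [V] (resp. [O]) converges to a unit vector [W].  For three
    points [a, b, c] with [nu (b - c)] small against [nu (a - b)], the [p]-triangle
    inequality makes the excess [nu (a - c) - nu (a - b)] of order [nu (b - c)^p], i.e.
    negligible.  This forces [nu] to have nonnegative one-sided derivative along the
    ray [x - t W] at [x = P i - V] (resp. at [x = W] along [-(P j - O)]), hence, being
    convex, not to decrease along the whole ray, which is absurd since the ray heads
    back towards [V] (resp. towards [0], [P j - O] having direction close to [W]).
    Conversely, for finite [X] the Frechet embedding of the metric [sqrt d] into
    [l^oo(X)] is isometric. *)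

From Stdlib Require Import Reals List Lra Lia Wf_nat.
From Stdlib Require Import Classical ClassicalEpsilon FunctionalExtensionality.
Open Scope R_scope.

(** * Sequences *)

Definition eventually (P : nat -> Prop) : Prop :=
  exists N, forall k, (N <= k)%nat -> P k.

Lemma eventually_and (P Q : nat -> Prop) :
  eventually P -> eventually Q -> eventually (fun k => P k /\ Q k).
Proof.
  intros [N1 H1] [N2 H2]; exists (N1 + N2)%nat; intros k Hk.
  split; [apply H1 | apply H2]; lia.
Qed.

Lemma eventually_ge (m : nat) : eventually (fun k => (m <= k)%nat).
Proof. now exists m. Qed.

Lemma eventually_mono (P Q : nat -> Prop) :
  (forall k, P k -> Q k) -> eventually P -> eventually Q.
Proof. intros HPQ [N HN]; exists N; auto. Qed.

Lemma eventually_exists (P : nat -> Prop) : eventually P -> exists k, P k.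
Proof. intros [N HN]; exists N; auto. Qed.

Definition tends0 (u : nat -> R) : Prop :=
  forall eps, 0 < eps -> eventually (fun k => Rabs (u k) < eps).

Definition strict_incr (phi : nat -> nat) : Prop := forall k, (phi k < phi (S k))%nat.

Lemma strict_incr_lt (phi : nat -> nat) :
  strict_incr phi -> forall a b, (a < b)%nat -> (phi a < phi b)%nat.
Proof. intros Hphi a b Hab; induction Hab; [apply Hphi | specialize (Hphi m); lia]. Qed.

Lemma strict_incr_ge (phi : nat -> nat) : strict_incr phi -> forall k, (k <= phi k)%nat.
Proof. intros Hphi k; induction k; [lia | specialize (Hphi k); lia]. Qed.

Lemma strict_incr_inj (phi : nat -> nat) :
  strict_incr phi -> forall a b, a <> b -> phi a <> phi b.
Proof.
  intros Hphi a b Hab; destruct (Nat.lt_gt_cases a b) as [[H | H] _]; auto;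
  pose proof (strict_incr_lt phi Hphi _ _ H); lia.
Qed.

Lemma strict_incr_comp (phi psi : nat -> nat) :
  strict_incr phi -> strict_incr psi -> strict_incr (fun k => phi (psi k)).
Proof. intros Hphi Hpsi k; apply strict_incr_lt; auto. Qed.

Lemma eventually_subseq (P : nat -> Prop) (phi : nat -> nat) :
  strict_incr phi -> eventually P -> eventually (fun k => P (phi k)).
Proof.
  intros Hphi [N HN]; exists N; intros k Hk; apply HN.
  pose proof (strict_incr_ge phi Hphi k); lia.
Qed.

Lemma tends0_subseq (u : nat -> R) (phi : nat -> nat) :
  strict_incr phi -> tends0 u -> tends0 (fun k => u (phi k)).
Proof. intros Hphi Hu eps Heps; exact (eventually_subseq _ phi Hphi (Hu eps Heps)). Qed.

Lemma tends0_le (u v : nat -> R) :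
  eventually (fun k => Rabs (u k) <= v k) -> tends0 v -> tends0 u.
Proof.
  intros Huv Hv eps Heps; eapply eventually_mono; [| exact (eventually_and _ _ Huv (Hv eps Heps))].
  intros k [H1 H2]; pose proof (RRle_abs (v k)); lra.
Qed.

Lemma tends0_plus (u v : nat -> R) : tends0 u -> tends0 v -> tends0 (fun k => u k + v k).
Proof.
  intros Hu Hv eps Heps.
  eapply eventually_mono;
    [| exact (eventually_and _ _ (Hu (eps / 2) ltac:(lra)) (Hv (eps / 2) ltac:(lra)))].
  intros k [H1 H2]; pose proof (Rabs_triang (u k) (v k)); lra.
Qed.

Lemma tends0_scal (c : R) (u : nat -> R) : tends0 u -> tends0 (fun k => c * u k).
Proof.
  intros Hu eps Heps.
  assert (Hc : 0 < Rabs c + 1) by (pose proof (Rabs_pos c); lra).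
  eapply eventually_mono; [| exact (Hu (eps / (Rabs c + 1)) ltac:(apply Rdiv_lt_0_compat; lra))].
  intros k Hk; rewrite Rabs_mult.
  apply Rmult_lt_compat_l with (r := Rabs c + 1) in Hk; auto.
  replace ((Rabs c + 1) * (eps / (Rabs c + 1))) with eps in Hk by (field; lra).
  pose proof (Rabs_pos (u k)); nra.
Qed.

Lemma tends0_mult (u v : nat -> R) : tends0 u -> tends0 v -> tends0 (fun k => u k * v k).
Proof.
  intros Hu Hv; apply (tends0_le _ (fun k => Rabs (u k))).
  - eapply eventually_mono; [| exact (Hv 1 ltac:(lra))].
    intros k Hk; rewrite Rabs_mult; pose proof (Rabs_pos (u k)); nra.
  - intros eps Heps; eapply eventually_mono; [| exact (Hu eps Heps)].
    intros k; rewrite Rabs_Rabsolu; auto.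
Qed.

Definition tends_infty (u : nat -> R) : Prop := forall M, eventually (fun k => M < u k).

Lemma tends0_inv (u : nat -> R) : tends_infty u -> tends0 (fun k => / u k).
Proof.
  intros Hu eps Heps.
  eapply eventually_mono; [| exact (Hu (/ eps))].
  intros k Hk; pose proof (Rinv_0_lt_compat _ Heps).
  rewrite Rabs_pos_eq by (left; apply Rinv_0_lt_compat; lra).
  rewrite <- (Rinv_inv eps); apply Rinv_lt_contravar; nra.
Qed.

Lemma tends0_Rpower (u : nat -> R) (q : R) :
  0 < q -> eventually (fun k => 0 < u k) -> tends0 u -> tends0 (fun k => Rpower (u k) q).
Proof.
  intros Hq Hpos Hu eps Heps.
  assert (Hroot : Rpower (Rpower eps (/ q)) q = eps).
  { rewrite Rpower_mult, Rinv_l, Rpower_1; lra. }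
  eapply eventually_mono; [| exact (eventually_and _ _ Hpos (Hu (Rpower eps (/ q)) (exp_pos _)))].
  intros k [Hk0 Hk]; rewrite Rabs_pos_eq in * by (left; try apply exp_pos; exact Hk0).
  rewrite <- Hroot; apply Rlt_Rpower_l; [exact Hq | split; [exact Hk0 | exact Hk]].
Qed.

Lemma Bolzano_Weierstrass_subseq (u : nat -> R) (M : R) :
  (forall k, Rabs (u k) <= M) ->
  exists phi l, strict_incr phi /\ tends0 (fun k => u (phi k) - l).
Proof.
  intro HM.
  destruct (Bolzano_Weierstrass u (fun c => -M <= c <= M) (compact_P3 (-M) M)) as [l Hl].
  { intro k; specialize (HM k); unfold Rabs in HM; destruct (Rcase_abs (u k)); lra. }
  assert (Hclose : forall N m, exists p, (N <= p)%nat /\ Rabs (u p - l) < / INR (S m)).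
  { intros N m.
    assert (Hpos : 0 < / INR (S m)) by (apply Rinv_0_lt_compat, lt_0_INR; lia).
    destruct (Hl (disc l (mkposreal _ Hpos)) N) as [p [Hp1 Hp2]].
    - exists (mkposreal _ Hpos); intros x Hx; exact Hx.
    - exists p; split; auto. }
  destruct (choice (fun Nm p => (fst Nm <= p)%nat /\ Rabs (u p - l) < / INR (S (snd Nm))))
    as [F HF].
  { intros [N m]; apply Hclose. }
  (* [phi (S k)] is chosen beyond [phi k] and within [1 / (k + 2)] of [l]. *)
  set (phi := fix phi k := match k with O => F (O, O) | S k => F (S (phi k), S k) end).
  assert (Hphi : forall k, Rabs (u (phi k) - l) < / INR (S k)).
  { intros [|k]; [apply (HF (O, O)) | apply (HF (S (phi k), S k))]. }
  exists phi, l; split.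
  - intro k; exact (proj1 (HF (S (phi k), S k))).
  - apply (tends0_le _ (fun k => / INR (S k))).
    + exists O; intros k _; left; apply Hphi.
    + apply tends0_inv; intro B; destruct (INR_unbounded B) as [N HN].
      exists N; intros k Hk; apply le_INR in Hk; rewrite S_INR; lra.
Qed.

Fixpoint l1 (n : nat) (c : nat -> R) : R :=
  match n with
  | O => 0
  | S m => Rabs (c O) + l1 m (fun i => c (S i))
  end.

Lemma l1_ext (n : nat) (c c' : nat -> R) :
  (forall i, (i < n)%nat -> c i = c' i) -> l1 n c = l1 n c'.
Proof.
  revert c c'; induction n as [|n IH]; intros c c' H; simpl; auto.
  rewrite (H O) by lia; f_equal; apply IH; intros; apply H; lia.
Qed.

Lemma l1_ge0 (n : nat) (c : nat -> R) : 0 <= l1 n c.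
Proof.
  revert c; induction n as [|n IH]; intro c; simpl; [lra|].
  pose proof (Rabs_pos (c O)); pose proof (IH (fun i => c (S i))); lra.
Qed.

Lemma l1_coord (n : nat) (c : nat -> R) (i : nat) : (i < n)%nat -> Rabs (c i) <= l1 n c.
Proof.
  revert c i; induction n as [|n IH]; intros c i Hi; simpl; [lia|].
  destruct i as [|i].
  - pose proof (l1_ge0 n (fun i => c (S i))); lra.
  - pose proof (IH (fun i => c (S i)) i ltac:(lia)); pose proof (Rabs_pos (c O)); lra.
Qed.

Lemma l1_triangle (n : nat) (c c' : nat -> R) : l1 n (fun i => c i + c' i) <= l1 n c + l1 n c'.
Proof.
  revert c c'; induction n as [|n IH]; intros c c'; simpl; [lra|].
  pose proof (Rabs_triang (c O) (c' O)).
  pose proof (IH (fun i => c (S i)) (fun i => c' (S i))); lra.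
Qed.

Lemma l1_scal (n : nat) (a : R) (c : nat -> R) : l1 n (fun i => a * c i) = Rabs a * l1 n c.
Proof.
  revert c; induction n as [|n IH]; intro c; simpl; [ring|].
  rewrite Rabs_mult, (IH (fun i => c (S i))); ring.
Qed.

Lemma l1_eq0 (n : nat) (c : nat -> R) : (forall i, (i < n)%nat -> c i = 0) -> l1 n c = 0.
Proof.
  intro H; rewrite (l1_ext n c (fun i => 0 * c i)) by (intros i Hi; rewrite (H i Hi); ring).
  rewrite l1_scal, Rabs_R0; ring.
Qed.

Lemma Bolzano_Weierstrass_l1 (n : nat) (u : nat -> nat -> R) (M : R) :
  (forall k i, (i < n)%nat -> Rabs (u k i) <= M) ->
  exists phi L, strict_incr phi /\ tends0 (fun k => l1 n (fun i => u (phi k) i - L i)).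
Proof.
  revert u; induction n as [|n IH]; intros u HM.
  - exists (fun k => k), (fun _ => 0); split; [intro; lia|].
    intros eps Heps; exists O; intros; simpl; rewrite Rabs_R0; lra.
  - destruct (Bolzano_Weierstrass_subseq (fun k => u k O) M) as [phi [l0 [Hphi Hl0]]].
    { intro k; apply HM; lia. }
    destruct (IH (fun k i => u (phi k) (S i))) as [psi [L [Hpsi HL]]].
    { intros k i Hi; apply HM; lia. }
    exists (fun k => phi (psi k)), (fun i => match i with O => l0 | S i => L i end); split.
    + apply strict_incr_comp; auto.
    + apply (tends0_le _ (fun k => Rabs (u (phi (psi k)) O - l0)
                                 + l1 n (fun i => u (phi (psi k)) (S i) - L i))).
      * exists O; intros k _; simpl.
        rewrite Rabs_pos_eq by (apply Rplus_le_le_0_compat; [apply Rabs_pos | apply l1_ge0]); lra.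
      * apply tends0_plus; [| exact HL].
        intros eps Heps; eapply eventually_mono; [| exact (tends0_subseq _ psi Hpsi Hl0 eps Heps)].
        intros k; rewrite Rabs_Rabsolu; auto.
Qed.

Lemma rpow_nonneg_pos (t p : R) : 0 < t -> rpow_nonneg t p = Rpower t p.
Proof. intro Ht; unfold rpow_nonneg; destruct (Rle_dec t 0); [lra | reflexivity]. Qed.

Lemma rpow_nonneg_ge0 (t p : R) : 0 <= rpow_nonneg t p.
Proof. unfold rpow_nonneg; destruct (Rle_dec t 0); [lra | left; apply exp_pos]. Qed.

Lemma rpow_nonneg_le (a b p : R) : 0 <= p -> 0 <= a <= b -> rpow_nonneg a p <= rpow_nonneg b p.
Proof.
  intros Hp Hab; unfold rpow_nonneg.
  destruct (Rle_dec a 0), (Rle_dec b 0); try lra; try (left; apply exp_pos).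
  apply Rle_Rpower_l; lra.
Qed.

Lemma Rpower_pred (t p : R) : 0 < t -> Rpower t p = t * Rpower t (p - 1).
Proof.
  intro Ht; rewrite <- (Rpower_1 t) at 2 by exact Ht.
  rewrite <- Rpower_plus; f_equal; ring.
Qed.

Lemma Rpower_Rinv_base (x y : R) : 0 < x -> Rpower (/ x) y = / Rpower x y.
Proof.
  intro Hx; unfold Rpower; rewrite ln_Rinv, <- exp_Ropp by exact Hx; f_equal; ring.
Qed.

Lemma rpow_nonneg_inv (t a : R) :
  0 < a -> 0 <= t -> rpow_nonneg (rpow_nonneg t a) (/ a) = t.
Proof.
  intros Ha Ht; destruct (Req_dec t 0) as [-> | Hne].
  - unfold rpow_nonneg; destruct (Rle_dec 0 0); [|lra]; destruct (Rle_dec 0 0); lra.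
  - rewrite (rpow_nonneg_pos t) by lra; rewrite rpow_nonneg_pos by apply exp_pos.
    rewrite Rpower_mult, Rinv_r, Rpower_1; lra.
Qed.

(* The bound [c^p / B^(p-1)] is [o(c)] as [c / B -> 0]; this is where [p > 1] enters. *)
Lemma snowflake_defect (p A B b0 c : R) :
  1 <= p -> 0 < b0 <= B ->
  rpow_nonneg A p <= rpow_nonneg B p + rpow_nonneg c p ->
  A - B <= rpow_nonneg c p / Rpower b0 (p - 1).
Proof.
  intros Hp Hb0 Htri.
  assert (Hpos : 0 < Rpower b0 (p - 1)) by apply exp_pos.
  assert (Hrhs : 0 <= rpow_nonneg c p / Rpower b0 (p - 1))
    by (apply Rmult_le_pos; [apply rpow_nonneg_ge0 | left; apply Rinv_0_lt_compat, Hpos]).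
  destruct (Rle_lt_dec A B) as [HAB | HAB]; [lra|].
  rewrite !rpow_nonneg_pos, !(Rpower_pred _ p) in Htri by lra.
  pose proof (Rle_Rpower_l b0 B (p - 1) ltac:(lra) Hb0).
  pose proof (Rle_Rpower_l B A (p - 1) ltac:(lra) ltac:(lra)).
  apply (Rmult_le_reg_r (Rpower b0 (p - 1))); [exact Hpos|].
  unfold Rdiv; rewrite Rmult_assoc, Rinv_l by lra; nra.
Qed.

Lemma Rabs_m1 : Rabs (-1) = 1.
Proof. rewrite Rabs_left; lra. Qed.

(** * Norms on the coordinate space *)

Section CoordinateNorm.
Variable nu : (nat -> R) -> R.
Hypothesis nu_subadd : forall c c', nu (fun i => c i + c' i) <= nu c + nu c'.
Hypothesis nu_hom : forall a c, nu (fun i => a * c i) = Rabs a * nu c.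

Lemma nu_ext (c c' : nat -> R) : (forall i, c i = c' i) -> nu c = nu c'.
Proof. intro H; f_equal; apply functional_extensionality, H. Qed.

Lemma nu_ge0 (c : nat -> R) : 0 <= nu c.
Proof.
  pose proof (nu_subadd c (fun i => -1 * c i)) as H.
  rewrite (nu_ext _ (fun i => 0 * c i)), !nu_hom, Rabs_R0, Rabs_m1 in H by (intro; ring).
  lra.
Qed.

Lemma nu_scal_pos (a : R) (c : nat -> R) : 0 <= a -> nu (fun i => a * c i) = a * nu c.
Proof. intro Ha; rewrite nu_hom, Rabs_pos_eq; auto. Qed.

Definition nu_dist (a b : nat -> R) : R := nu (fun i => a i - b i).

Lemma nu_dist_ge0 (a b : nat -> R) : 0 <= nu_dist a b.
Proof. apply nu_ge0. Qed.

Lemma nu_dist_sym (a b : nat -> R) : nu_dist a b = nu_dist b a.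
Proof.
  unfold nu_dist; rewrite (nu_ext _ (fun i => -1 * (b i - a i))) by (intro; ring).
  rewrite nu_hom, Rabs_m1; ring.
Qed.

Lemma nu_dist_triangle (a b c : nat -> R) : nu_dist a c <= nu_dist a b + nu_dist b c.
Proof.
  unfold nu_dist; rewrite (nu_ext _ (fun i => (a i - b i) + (b i - c i))) by (intro; ring).
  apply nu_subadd.
Qed.

Lemma nu_triang_inv (a b : nat -> R) : nu a - nu b <= nu_dist a b.
Proof.
  pose proof (nu_subadd b (fun i => a i - b i)) as H.
  rewrite (nu_ext _ a) in H by (intro; ring); unfold nu_dist; lra.
Qed.

Lemma nu_chord (x z : nat -> R) (s t : R) : 0 < s <= t ->
  t * nu (fun i => x i - s * z i) <= (t - s) * nu x + s * nu (fun i => x i - t * z i).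
Proof.
  intro Hst.
  rewrite (nu_ext (fun i => x i - s * z i) (fun i => (1 - s / t) * x i + s / t * (x i - t * z i)))
    by (intro; field; lra).
  assert (Hq : 0 <= s / t <= 1).
  { split; [apply Rlt_le, Rdiv_lt_0_compat; lra|].
    apply (Rmult_le_reg_r t); [lra|]; unfold Rdiv; rewrite Rmult_assoc, Rinv_l; lra. }
  pose proof (nu_subadd (fun i => (1 - s / t) * x i) (fun i => s / t * (x i - t * z i))) as H.
  rewrite !nu_scal_pos in H by lra.
  apply Rmult_le_compat_l with (r := t) in H; [|lra].
  replace (t * ((1 - s / t) * nu x + s / t * nu (fun i => x i - t * z i)))
    with ((t - s) * nu x + s * nu (fun i => x i - t * z i)) in H by (field; lra).
  exact H.
Qed.

Lemma nu_half (a b : nat -> R) :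
  nu a <= nu (fun i => a i - / 2 * b i) -> nu a <= nu_dist a b.
Proof.
  intro H.
  rewrite (nu_ext (fun i => a i - / 2 * b i) (fun i => / 2 * a i + / 2 * (a i - b i))) in H
    by (intro; field).
  pose proof (nu_subadd (fun i => / 2 * a i) (fun i => / 2 * (a i - b i))).
  rewrite !nu_scal_pos in * by lra; unfold nu_dist; lra.
Qed.

(* By convexity ([nu_chord]) a decrease of [nu] by [o(s_k)] at scale [s_k] bounds the
   decrease at every larger scale [t]. *)
Lemma nu_ray_ge (x z : nat -> nat -> R) (x0 z0 : nat -> R) (s eta : nat -> R) :
  tends0 (fun k => nu_dist (x k) x0) -> tends0 (fun k => nu_dist (z k) z0) ->
  (forall k, 0 < s k) -> tends0 s -> tends0 eta ->
  eventually (fun k => nu (x k) - nu (fun i => x k i - s k * z k i) <= s k * eta k) ->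
  forall t, 0 < t -> nu x0 <= nu (fun i => x0 i - t * z0 i).
Proof.
  intros Hx Hz Hs Hs0 Heta Hdefect t Ht; apply Rle_plus_epsilon; intros del Hdel.
  assert (Hdt : 0 < del / (4 * t)) by (apply Rdiv_lt_0_compat; lra).
  destruct (eventually_exists _
    (eventually_and _ _ (eventually_and _ _ (Hx (del / 4) ltac:(lra)) (Hz _ Hdt))
       (eventually_and _ _ (eventually_and _ _ (Heta _ Hdt) (Hs0 t Ht)) Hdefect)))
    as [k [[Hxk Hzk] [[Hek Hsk] Hdk]]].
  rewrite Rabs_pos_eq in Hxk, Hzk by apply nu_ge0.
  pose proof (Hs k) as Hs_pos; rewrite Rabs_pos_eq in Hsk by lra.
  pose proof (RRle_abs (eta k)) as Heta_abs.
  assert (Hdt' : t * (del / (4 * t)) = del / 4) by (field; lra).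
  assert (Hdec_s : nu (x k) - nu (fun i => x k i - s k * z0 i) <= s k * (eta k + del / (4 * t))).
  { pose proof (nu_triang_inv (fun i => x k i - s k * z k i) (fun i => x k i - s k * z0 i)) as H.
    unfold nu_dist in H.
    rewrite (nu_ext (fun i => x k i - s k * z k i - (x k i - s k * z0 i))
                    (fun i => s k * (z0 i - z k i))), nu_scal_pos in H by (lra || intro; ring).
    pose proof (nu_dist_sym (z k) z0) as Hsym; unfold nu_dist in Hsym, Hzk; nra. }
  pose proof (nu_chord (x k) z0 (s k) t ltac:(lra)) as Hch.
  assert (Hdec_t : nu (x k) - nu (fun i => x k i - t * z0 i) <= t * (eta k + del / (4 * t))) by nra.
  pose proof (nu_triang_inv (fun i => x k i - t * z0 i) (fun i => x0 i - t * z0 i)) as Hmove.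
  unfold nu_dist in Hmove.
  rewrite (nu_ext (fun i => x k i - t * z0 i - (x0 i - t * z0 i)) (fun i => x k i - x0 i)) in Hmove
    by (intro; ring).
  pose proof (nu_triang_inv x0 (x k)) as Hx0; rewrite nu_dist_sym in Hx0.
  unfold nu_dist in *; nra.
Qed.

Variables (n : nat) (K : R).
Hypothesis nu_bound : forall c, nu c <= K * l1 n c.
Hypothesis nu_definite : forall c, nu c = 0 -> forall i, (i < n)%nat -> c i = 0.

Lemma nu_le_eps (c : nat -> R) : (forall eps, 0 < eps -> nu c < eps) -> nu c = 0.
Proof.
  intro H; pose proof (nu_ge0 c); destruct (Req_dec (nu c) 0) as [|Hne]; auto.
  specialize (H (nu c) ltac:(lra)); lra.
Qed.

(* By compactness of the [l1] unit sphere. *)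
Lemma l1_le_nu : exists C, 0 < C /\ forall c, l1 n c <= C * nu c.
Proof.
  apply NNPP; intro Hno.
  assert (Hbad : forall m, exists c, INR (S m) * nu c < l1 n c).
  { intro m; apply NNPP; intro Hm; apply Hno; exists (INR (S m)); split.
    - apply lt_0_INR; lia.
    - intro c; apply Rnot_lt_le; intro Hc; apply Hm; eauto. }
  destruct (choice _ Hbad) as [c Hc].
  assert (Hl1 : forall m, 0 < l1 n (c m)).
  { intro m; pose proof (nu_ge0 (c m)); pose proof (pos_INR (S m)); specialize (Hc m); nra. }
  set (u := fun m i => / l1 n (c m) * c m i).
  assert (Hu1 : forall m, l1 n (u m) = 1).
  { intro m; unfold u; rewrite l1_scal, Rabs_pos_eq by (left; apply Rinv_0_lt_compat, Hl1).
    field; specialize (Hl1 m); lra. }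
  assert (Hnu : forall m, nu (u m) < / INR (S m)).
  { intro m; unfold u; rewrite nu_scal_pos by (left; apply Rinv_0_lt_compat, Hl1).
    pose proof (Hl1 m); pose proof (Hc m); assert (0 < INR (S m)) by (apply lt_0_INR; lia).
    apply (Rmult_lt_reg_l (INR (S m) * l1 n (c m))); [nra|].
    field_simplify; [nra | lra | lra]. }
  destruct (Bolzano_Weierstrass_l1 n u 1) as [phi [L [Hphi HL]]].
  { intros m i Hi; rewrite <- (Hu1 m); apply l1_coord, Hi. }
  assert (HnuL : nu L = 0).
  { apply nu_le_eps; intros eps Heps.
    assert (Hinv : tends0 (fun k => / INR (S (phi k)))).
    { apply tends0_inv; intro B; destruct (INR_unbounded B) as [N HN]; exists N; intros k Hk.
      pose proof (strict_incr_ge phi Hphi k) as Hge; apply le_INR in Hk; apply le_INR in Hge.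
      rewrite S_INR; lra. }
    destruct (eventually_exists _ (eventually_and _ _ (Hinv (eps / 2) ltac:(lra))
                                    (tends0_scal K _ HL (eps / 2) ltac:(lra)))) as [k [H1 H2]].
    pose proof (nu_triang_inv L (u (phi k))) as H3; rewrite nu_dist_sym in H3.
    pose proof (nu_bound (fun i => u (phi k) i - L i)); pose proof (Hnu (phi k)).
    pose proof (RRle_abs (/ INR (S (phi k)))).
    pose proof (RRle_abs (K * l1 n (fun i => u (phi k) i - L i))).
    unfold nu_dist in H3; lra. }
  pose proof (l1_eq0 n L (nu_definite L HnuL)) as HL0.
  destruct (eventually_exists _ (HL (1 / 2) ltac:(lra))) as [k Hk].
  pose proof (l1_triangle n L (fun i => u (phi k) i - L i)) as Htri; cbv beta in Htri.
  rewrite (l1_ext n (fun i => L i + (u (phi k) i - L i)) (u (phi k))), Hu1 in Htri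
    by (intros; ring).
  pose proof (RRle_abs (l1 n (fun i => u (phi k) i - L i))); lra.
Qed.

Lemma nu_bounded_subseq (u : nat -> nat -> R) (M : R) :
  (forall k, nu (u k) <= M) ->
  exists phi L, strict_incr phi /\ tends0 (fun k => nu_dist (u (phi k)) L).
Proof.
  intro HM; destruct l1_le_nu as [C [HC Hl1]].
  destruct (Bolzano_Weierstrass_l1 n u (C * M)) as [phi [L [Hphi HL]]].
  { intros k i Hi; eapply Rle_trans; [apply l1_coord, Hi|].
    eapply Rle_trans; [apply Hl1 | apply Rmult_le_compat_l; [lra | apply HM]]. }
  exists phi, L; split; auto.
  apply (tends0_le _ (fun k => K * l1 n (fun i => u (phi k) i - L i))).
  - exists O; intros k _; rewrite Rabs_pos_eq by apply nu_ge0; apply nu_bound.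
  - apply tends0_scal, HL.
Qed.

Lemma nu_unit_directions (u : nat -> nat -> R) :
  (forall k, 0 < nu (u k)) ->
  exists phi W, strict_incr phi /\ nu W = 1 /\
    tends0 (fun k => nu_dist (fun i => / nu (u (phi k)) * u (phi k) i) W).
Proof.
  intro Hpos.
  set (w := fun k i => / nu (u k) * u k i).
  assert (Hw : forall k, nu (w k) = 1).
  { intro k; unfold w; rewrite nu_scal_pos by (left; apply Rinv_0_lt_compat, Hpos).
    specialize (Hpos k); field; lra. }
  destruct (nu_bounded_subseq w 1) as [phi [W [Hphi HW]]].
  { intro k; rewrite Hw; lra. }
  exists phi, W; split; [auto | split; [| exact HW]].
  apply NNPP; intro Hne.
  assert (Heps : 0 < Rabs (nu W - 1)) by (apply Rabs_pos_lt; lra).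
  destruct (eventually_exists _ (HW _ Heps)) as [k Hk].
  rewrite Rabs_pos_eq in Hk by apply nu_ge0.
  pose proof (nu_triang_inv W (w (phi k))) as H1; pose proof (nu_triang_inv (w (phi k)) W) as H2.
  rewrite nu_dist_sym in H1; rewrite Hw in *.
  unfold nu_dist in *; revert Hk; unfold Rabs; destruct (Rcase_abs (nu W - 1)); lra.
Qed.

(** * Snowflake sets *)

Definition snowflake (p : R) (E : (nat -> R) -> Prop) : Prop :=
  forall a b c, E a -> E b -> E c ->
    rpow_nonneg (nu_dist a c) p <= rpow_nonneg (nu_dist a b) p + rpow_nonneg (nu_dist b c) p.

Section Cluster.
Variables (p : R) (E : (nat -> R) -> Prop) (P : nat -> nat -> R).
Variables (V W : nat -> R) (s : nat -> R) (dir : nat -> nat -> R).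
Hypothesis p_gt1 : 1 < p.
Hypothesis E_snowflake : snowflake p E.
Hypothesis E_P : forall k, E (P k).
Hypothesis P_polar : forall k i, P k i = V i + s k * dir k i.
Hypothesis s_pos : forall k, 0 < s k.
Hypothesis s_tends0 : tends0 s.
Hypothesis dir_unit : forall k, nu (dir k) = 1.
Hypothesis dir_cv : tends0 (fun k => nu_dist (dir k) W).

Lemma cluster_dist (k : nat) : nu_dist (P k) V = s k.
Proof.
  unfold nu_dist; rewrite (nu_ext (fun i => P k i - V i) (fun i => s k * dir k i))
    by (intro; rewrite P_polar; ring).
  rewrite nu_scal_pos, dir_unit by (left; apply s_pos); ring.
Qed.

(* The snowflake inequality on [P i], [P j] and a point [P (kappa j)] much closer to [V]
   than [P j] shows that [nu] at [P i - V] decreases by [o(s j)] along [s j * dir j]. *)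
Lemma cluster_ray (i : nat) (t : R) : 0 < t ->
  nu (fun l => P i l - V l) <= nu (fun l => P i l - V l - t * W l).
Proof.
  intro Ht.
  assert (Hkappa : forall j, exists k, s k <= s j * s j).
  { intro j; pose proof (s_pos j).
    destruct (eventually_exists _ (s_tends0 (s j * s j) ltac:(nra))) as [k Hk].
    exists k; pose proof (RRle_abs (s k)); lra. }
  destruct (choice _ Hkappa) as [kappa Hkappa_le].
  pose proof (s_pos i) as Ha.
  set (eta := fun j => / Rpower (s i / 2) (p - 1) * (2 * Rpower (2 * s j) (p - 1))).
  apply (nu_ray_ge (fun j l => P i l - P (kappa j) l) (fun j l => / s j * (P j l - P (kappa j) l))
           _ W s eta); auto.
  - apply (tends0_le _ (fun j => s j * s j)); [| apply tends0_mult; auto].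
    exists O; intros j _; rewrite Rabs_pos_eq by apply nu_ge0.
    eapply Rle_trans; [| apply Hkappa_le].
    rewrite <- (cluster_dist (kappa j)), nu_dist_sym; unfold nu_dist.
    right; apply nu_ext; intro; ring.
  - apply (tends0_le _ (fun j => nu_dist (dir j) W + s j)); [| apply tends0_plus; auto].
    exists O; intros j _; rewrite Rabs_pos_eq by apply nu_ge0.
    pose proof (s_pos j); pose proof (Hkappa_le j).
    eapply Rle_trans; [apply (nu_dist_triangle _ (dir j) W)|].
    rewrite Rplus_comm; apply Rplus_le_compat_l.
    unfold nu_dist.
    rewrite (nu_ext (fun l => / s j * (P j l - P (kappa j) l) - dir j l)
                    (fun l => (s (kappa j) / s j) * (-1 * dir (kappa j) l)))
      by (intro l; rewrite !P_polar; field; apply Rgt_not_eq, s_pos).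
    rewrite nu_scal_pos, nu_hom, Rabs_m1, dir_unit
      by (left; apply Rdiv_lt_0_compat; apply s_pos).
    apply (Rmult_le_reg_r (s j)); [auto|]; field_simplify; nra.
  - apply tends0_scal, tends0_scal, tends0_Rpower;
      [lra | exists O; intros; pose proof (s_pos k); lra |].
    apply tends0_scal, s_tends0.
  -     assert (Hsmall : eventually (fun j => (S i <= j)%nat /\ s j <= 1 /\ s j <= s i / 2)).
    { apply eventually_and; [apply eventually_ge|]; apply eventually_and;
        [eapply eventually_mono; [| exact (s_tends0 1 ltac:(lra))] |
         eapply eventually_mono; [| exact (s_tends0 (s i / 2) ltac:(lra))]];
        intros j Hj; pose proof (RRle_abs (s j)); lra. }
    eapply eventually_mono; [| exact Hsmall]; intros j [Hji [Hs1 Hsa]]; cbv beta.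
    pose proof (s_pos j) as Hsj; pose proof (Hkappa_le j) as Hkj; pose proof (s_pos (kappa j)).
    set (B := nu_dist (P i) (P j)).
    assert (HB : s i / 2 <= B).
    { pose proof (nu_dist_triangle (P i) (P j) V) as Htri.
      rewrite !cluster_dist in Htri; unfold B; lra. }
    assert (Hc : nu_dist (P j) (P (kappa j)) <= 2 * s j).
    { pose proof (nu_dist_triangle (P j) V (P (kappa j))).
      rewrite (nu_dist_sym V), !cluster_dist in *; nra. }
    pose proof (snowflake_defect p (nu_dist (P i) (P (kappa j))) B (s i / 2) _ ltac:(lra)
                  ltac:(lra) (E_snowflake _ _ _ (E_P i) (E_P j) (E_P (kappa j))))
      as Hdef.
    pose proof (rpow_nonneg_le _ _ p ltac:(lra) (conj (nu_ge0 _) Hc)) as Hcp.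
    rewrite (rpow_nonneg_pos (2 * s j)), Rpower_pred in Hcp by lra.
    assert (HB_eq :
      nu (fun l => P i l - P (kappa j) l - s j * (/ s j * (P j l - P (kappa j) l))) = B).
    { apply nu_ext; intro l; field; lra. }
    rewrite HB_eq; unfold eta; fold (nu_dist (P i) (P (kappa j))).
    assert (Hpa : 0 < Rpower (s i / 2) (p - 1)) by apply exp_pos.
    eapply Rle_trans; [exact Hdef|].
    replace (s j * (/ Rpower (s i / 2) (p - 1) * (2 * Rpower (2 * s j) (p - 1))))
      with (2 * s j * Rpower (2 * s j) (p - 1) / Rpower (s i / 2) (p - 1)) by (field; lra).
    apply Rmult_le_compat_r; [left; apply Rinv_0_lt_compat, Hpa | exact Hcp].
Qed.

Lemma cluster_false : False.
Proof.
  destruct (eventually_exists _ (dir_cv 1 ltac:(lra))) as [i Hi].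
  rewrite Rabs_pos_eq in Hi by apply nu_ge0.
  pose proof (s_pos i) as Hsi.
  pose proof (cluster_ray i (s i / 2) ltac:(lra)) as Hray.
  rewrite (nu_ext (fun l => P i l - V l - s i / 2 * W l) (fun l => s i * (dir i l - / 2 * W l))),
          (nu_ext (fun l => P i l - V l) (fun l => s i * dir i l)), !nu_scal_pos in Hray
    by (lra || intro; rewrite P_polar; field).
  apply Rmult_le_reg_l in Hray; [| exact Hsi].
  pose proof (nu_half (dir i) W Hray); rewrite dir_unit in *; lra.
Qed.

End Cluster.

Section Escape.
Variables (p : R) (E : (nat -> R) -> Prop) (P : nat -> nat -> R).
Variables (base W : nat -> R) (s : nat -> R) (dir : nat -> nat -> R).
Hypothesis p_gt1 : 1 < p.
Hypothesis E_snowflake : snowflake p E.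
Hypothesis E_base : E base.
Hypothesis E_P : forall k, E (P k).
Hypothesis P_polar : forall k i, P k i = base i + s k * dir k i.
Hypothesis s_pos : forall k, 0 < s k.
Hypothesis s_infty : tends_infty s.
Hypothesis dir_unit : forall k, nu (dir k) = 1.
Hypothesis W_unit : nu W = 1.
Hypothesis dir_cv : tends0 (fun k => nu_dist (dir k) W).

Lemma escape_dist (k : nat) : nu_dist (P k) base = s k.
Proof.
  unfold nu_dist; rewrite (nu_ext (fun i => P k i - base i) (fun i => s k * dir k i))
    by (intro; rewrite P_polar; ring).
  rewrite nu_scal_pos, dir_unit by (left; apply s_pos); ring.
Qed.

(* The snowflake inequality on [P k], [P j] and [base]: seen from [P k] far away, [P j]
   and [base] are at the same distance up to [o(1)]. *)
Lemma escape_ray (j : nat) (t : R) : 0 < t ->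
  nu W <= nu (fun l => W l - t * (P j l - base l)).
Proof.
  intro Ht.
  set (c := nu_dist (P j) base).
  assert (Hfar : tends_infty (fun k => s k - c)).
  { intro M; eapply eventually_mono; [| exact (s_infty (M + c))]; intros k Hk; lra. }
  set (eta := fun k => rpow_nonneg c p * Rpower (/ (s k - c)) (p - 1)).
  apply (nu_ray_ge dir (fun _ l => P j l - base l) _ _ (fun k => / s k) eta); auto.
  - intros eps Heps; exists O; intros k _.
    unfold nu_dist; rewrite (nu_ext _ (fun l => 0 * (P j l - base l))) by (intro; ring).
    rewrite nu_hom, Rabs_R0, Rmult_0_l, Rabs_R0; lra.
  - intro k; apply Rinv_0_lt_compat, s_pos.
  - apply tends0_inv, s_infty.
  - apply tends0_scal, tends0_Rpower; [lra | | apply tends0_inv, Hfar].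
    eapply eventually_mono; [| exact (Hfar 0)]; intros k Hk; apply Rinv_0_lt_compat, Hk.
  - eapply eventually_mono; [| exact (Hfar 0)]; intros k Hk; cbv beta in Hk |- *.
    pose proof (s_pos k) as Hsk.
    set (B := nu_dist (P k) (P j)).
    assert (HB : s k - c <= B).
    { pose proof (nu_dist_triangle (P k) (P j) base) as Htri.
      rewrite escape_dist in Htri; unfold B, c; lra. }
    pose proof (snowflake_defect p (s k) B (s k - c) c ltac:(lra) ltac:(lra)) as Hdef.
    rewrite <- escape_dist in Hdef at 1.
    specialize (Hdef (E_snowflake _ _ _ (E_P k) (E_P j) E_base)).
    rewrite dir_unit.
    rewrite (nu_ext (fun l => dir k l - / s k * (P j l - base l))
                    (fun l => / s k * (P k l - P j l)))
      by (intro l; rewrite (P_polar k); field; lra).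
    rewrite nu_scal_pos by (left; apply Rinv_0_lt_compat, Hsk); fold (nu_dist (P k) (P j) ); fold B.
    unfold eta; rewrite Rpower_Rinv_base by exact Hk.
    apply (Rmult_le_reg_l (s k)); [exact Hsk|].
    replace (s k * (1 - / s k * B)) with (s k - B) by (field; lra).
    replace (s k * (/ s k * (rpow_nonneg c p * / Rpower (s k - c) (p - 1))))
      with (rpow_nonneg c p / Rpower (s k - c) (p - 1))
      by (field; split; [apply Rgt_not_eq, exp_pos | lra]).
    exact Hdef.
Qed.

Lemma escape_false : False.
Proof.
  destruct (eventually_exists _ (dir_cv 1 ltac:(lra))) as [j Hj].
  rewrite Rabs_pos_eq in Hj by apply nu_ge0.
  pose proof (s_pos j) as Hsj.
  pose proof (escape_ray j (/ (2 * s j)) ltac:(apply Rinv_0_lt_compat; lra)) as Hray.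
  rewrite (nu_ext (fun l => W l - / (2 * s j) * (P j l - base l))
                  (fun l => W l - / 2 * dir j l)) in Hray
    by (intro l; rewrite P_polar; field; lra).
  pose proof (nu_half W (dir j) Hray) as Hhalf; rewrite nu_dist_sym in Hhalf; lra.
Qed.

End Escape.

Lemma snowflake_no_limit (p : R) (E : (nat -> R) -> Prop) (P : nat -> nat -> R) (V : nat -> R) :
  1 < p -> snowflake p E -> (forall k, E (P k)) ->
  (forall a b, a <> b -> 0 < nu_dist (P a) (P b)) ->
  tends0 (fun k => nu_dist (P k) V) -> False.
Proof.
  intros Hp HE HP Hsep Hlim.
  assert (Hm : exists m, forall k, 0 < nu_dist (P (k + m)%nat) V).
  { destruct (classic (exists k0, nu_dist (P k0) V = 0)) as [[k0 Hk0] | Hno].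
    - exists (S k0); intro k.
      destruct (nu_dist_ge0 (P (k + S k0)%nat) V) as [| Hk]; auto; exfalso.
      pose proof (Hsep (k + S k0)%nat k0 ltac:(lia)).
      pose proof (nu_dist_triangle (P (k + S k0)%nat) V (P k0)); rewrite (nu_dist_sym V) in *; lra.
    - exists O; intro k; destruct (nu_dist_ge0 (P (k + 0)%nat) V) as [| Hk]; auto.
      exfalso; apply Hno; eauto. }
  destruct Hm as [m Hm].
  set (s := fun k => nu_dist (P (k + m)%nat) V).
  destruct (nu_unit_directions (fun k i => P (k + m)%nat i - V i) Hm) as [phi [W [Hphi [_ HW]]]].
  apply (cluster_false p E (fun k => P (phi k + m)%nat) V W (fun k => s (phi k))
           (fun k i => / s (phi k) * (P (phi k + m)%nat i - V i))); auto.
  - intros k i; pose proof (Hm (phi k)); unfold s; field; lra.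
  - intro k; apply Hm.
  - apply (tends0_subseq (fun k => nu_dist (P k) V) (fun k => (phi k + m)%nat)); auto.
    intro k; specialize (Hphi k); lia.
  - intro k; rewrite nu_scal_pos by (left; apply Rinv_0_lt_compat, Hm).
    pose proof (Hm (phi k)); unfold s, nu_dist in *; field; lra.
Qed.

Lemma snowflake_no_separated_seq (p : R) (E : (nat -> R) -> Prop) (P : nat -> nat -> R) :
  1 < p -> snowflake p E -> (forall k, E (P k)) ->
  (forall a b, a <> b -> 0 < nu_dist (P a) (P b)) -> False.
Proof.
  intros Hp HE HP Hsep.
  destruct (classic (exists M, forall k, nu_dist (P k) (P O) <= M)) as [[M HM] | Hunb].
  - destruct (nu_bounded_subseq (fun k i => P k i - P O i) M HM) as [phi [L [Hphi HL]]].
    apply (snowflake_no_limit p E (fun k => P (phi k)) (fun i => L i + P O i)); auto.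
    + intros a b Hab; apply Hsep, strict_incr_inj; auto.
    + eapply tends0_le; [exists O; intros k _ | exact HL]; cbv beta.
      rewrite Rabs_pos_eq by apply nu_dist_ge0; right; unfold nu_dist; apply nu_ext; intro; ring.
  - assert (Hfar : forall m, exists k, INR m < nu_dist (P k) (P O)).
    { intro m; apply NNPP; intro Hm; apply Hunb; exists (INR m); intro k.
      apply Rnot_lt_le; intro Hk; apply Hm; eauto. }
    destruct (choice _ Hfar) as [F HF].
    assert (Hpos : forall m, 0 < nu_dist (P (F m)) (P O))
      by (intro m; pose proof (pos_INR m); pose proof (HF m); lra).
    destruct (nu_unit_directions (fun m i => P (F m) i - P O i) Hpos) as [phi [W [Hphi [HW1 HW]]]].
    apply (escape_false p E (fun k => P (F (phi k))) (P O) W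
             (fun k => nu_dist (P (F (phi k))) (P O))
             (fun k i => / nu_dist (P (F (phi k))) (P O) * (P (F (phi k)) i - P O i))); auto.
    + intros k i; pose proof (Hpos (phi k)); field; lra.
    + intro M; destruct (INR_unbounded M) as [N HN]; exists N; intros k Hk.
      pose proof (HF (phi k)); pose proof (strict_incr_ge phi Hphi k) as Hge.
      apply le_INR in Hk; apply le_INR in Hge; lra.
    + intro k; rewrite nu_scal_pos by (left; apply Rinv_0_lt_compat, Hpos).
      pose proof (Hpos (phi k)); unfold nu_dist in *; field; lra.
Qed.

End CoordinateNorm.

(** * Finite-dimensional normed spaces *)

Section FiniteDimensional.
Variable N : NormedSpace.
Notation add := (ns_add N).
Notation scal := (ns_scal N).
Notation zero := (ns_zero N).
Notation norm := (ns_norm N).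

Lemma ns_add_zero_l (u : N) : add zero u = u.
Proof. rewrite ns_add_comm; apply ns_add_zero. Qed.

Lemma ns_add_cancel_l (u v w : N) : add w u = add w v -> u = v.
Proof.
  intro H; rewrite <- (ns_add_zero_l u), <- (ns_add_zero_l v), <- (ns_add_opp N w),
    (ns_add_comm N w), <- !ns_add_assoc, H; reflexivity.
Qed.

Lemma ns_scal_zero_l (u : N) : scal 0 u = zero.
Proof.
  apply (ns_add_cancel_l _ _ (scal 0 u)).
  rewrite ns_add_zero, <- ns_scal_distr_r, Rplus_0_r; reflexivity.
Qed.

Lemma ns_scal_zero_r (a : R) : scal a zero = zero.
Proof.
  apply (ns_add_cancel_l _ _ (scal a zero)).
  rewrite ns_add_zero, <- ns_scal_distr_l, ns_add_zero; reflexivity.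
Qed.

Lemma ns_opp_scal (u : N) : ns_opp N u = scal (-1) u.
Proof.
  apply (ns_add_cancel_l _ _ u); rewrite ns_add_opp.
  rewrite <- (ns_scal_one N u) at 1; rewrite <- ns_scal_distr_r.
  replace (1 + -1) with 0 by ring; symmetry; apply ns_scal_zero_l.
Qed.

Lemma ns_norm_zero : norm zero = 0.
Proof. rewrite <- (ns_scal_zero_l zero), ns_norm_scal, Rabs_R0; ring. Qed.

Fixpoint lc (e : nat -> N) (c : nat -> R) (n : nat) : N :=
  match n with
  | O => zero
  | S m => add (scal (c O) (e O)) (lc (fun i => e (S i)) (fun i => c (S i)) m)
  end.

Lemma lc_ext (e e' : nat -> N) (c c' : nat -> R) (n : nat) :
  (forall i, (i < n)%nat -> e i = e' i /\ c i = c' i) -> lc e c n = lc e' c' n.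
Proof.
  revert e e' c c'; induction n as [|n IH]; intros e e' c c' H; simpl; auto.
  destruct (H O ltac:(lia)) as [-> ->]; f_equal; apply IH; intros; apply H; lia.
Qed.

Lemma lc_add (e : nat -> N) (c c' : nat -> R) (n : nat) :
  lc e (fun i => c i + c' i) n = add (lc e c n) (lc e c' n).
Proof.
  revert e c c'; induction n as [|n IH]; intros; simpl; [now rewrite ns_add_zero|].
  rewrite IH, ns_scal_distr_r, <- !ns_add_assoc; f_equal.
  rewrite !ns_add_assoc; f_equal; apply ns_add_comm.
Qed.

Lemma lc_scal (e : nat -> N) (a : R) (c : nat -> R) (n : nat) :
  lc e (fun i => a * c i) n = scal a (lc e c n).
Proof.
  revert e c; induction n as [|n IH]; intros; simpl; [now rewrite ns_scal_zero_r|].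
  rewrite IH, ns_scal_distr_l, ns_scal_assoc; reflexivity.
Qed.

Lemma lc_zero (e : nat -> N) (n : nat) : lc e (fun _ => 0) n = zero.
Proof.
  rewrite <- (ns_scal_zero_l (lc e (fun _ => 0) n)), <- lc_scal.
  apply lc_ext; intros; split; auto; ring.
Qed.

Lemma lincomb_lc (cs : list R) (l : list N) :
  lincomb N cs l = lc (fun i => nth i l zero) (fun i => nth i cs 0) (length l).
Proof.
  revert cs; induction l as [|x l IH]; intros [|c cs]; try reflexivity; simpl.
  - rewrite ns_scal_zero_l, ns_add_zero_l.
    transitivity (lc (fun i => nth i l zero) (fun _ => 0) (length l)); [symmetry; apply lc_zero|].
    apply lc_ext; intros i _; split; auto; destruct i; reflexivity.
  - f_equal; apply IH.
Qed.

Lemma lc_norm_le (e : nat -> N) (c : nat -> R) (n : nat) :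
  norm (lc e c n) <= l1 n (fun i => norm (e i)) * l1 n c.
Proof.
  revert e c; induction n as [|n IH]; intros; simpl; [rewrite ns_norm_zero; lra|].
  eapply Rle_trans; [apply ns_norm_triangle|]; rewrite ns_norm_scal.
  pose proof (IH (fun i => e (S i)) (fun i => c (S i))).
  pose proof (RRle_abs (norm (e O))); pose proof (Rabs_pos (c O)).
  pose proof (Rabs_pos (norm (e O))).
  pose proof (l1_ge0 n (fun i => norm (e (S i)))); pose proof (l1_ge0 n (fun i => c (S i))).
  nra.
Qed.

Definition skip (j i : nat) : nat := if Nat.ltb i j then i else S i.

Lemma lc_skip (e : nat -> N) (c : nat -> R) (m j : nat) : (j < S m)%nat ->
  lc e c (S m) = add (scal (c j) (e j)) (lc (fun i => e (skip j i)) (fun i => c (skip j i)) m).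
Proof.
  revert e c j; induction m as [|m IH]; intros e c j Hj.
  - replace j with O by lia; reflexivity.
  - destruct j as [|j]; [reflexivity|].
    change (lc e c (S (S m)))
      with (add (scal (c O) (e O)) (lc (fun i => e (S i)) (fun i => c (S i)) (S m))).
    rewrite (IH _ _ j) by lia; simpl.
    rewrite !ns_add_assoc, (ns_add_comm N (scal (c O) (e O))); f_equal.
    apply lc_ext; intros i _; unfold skip.
    replace (S i <? S j) with (i <? j) by reflexivity; destruct (i <? j); auto.
Qed.

Definition spans (e : nat -> N) (n : nat) : Prop := forall v, exists c, v = lc e c n.

Definition independent (e : nat -> N) (n : nat) : Prop :=
  forall c, lc e c n = zero -> forall i, (i < n)%nat -> c i = 0.

(* A spanning family of minimal length is independent: a nontrivial relation would let
   one vector be dropped. *)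
Lemma finite_dimensional_basis :
  finite_dimensional N -> exists e n, spans e n /\ independent e n.
Proof.
  intros [l Hl].
  destruct (dec_inh_nat_subset_has_unique_least_element (fun n => exists e, spans e n))
    as [n [[[e He] Hmin] _]].
  { intro n; apply classic. }
  { exists (length l), (fun i => nth i l zero); intro v.
    destruct (Hl v) as [cs ->]; eexists; apply lincomb_lc. }
  exists e, n; split; auto; intros c Hc j Hj; apply NNPP; intro Hcj.
  destruct n as [|m]; [lia|].
  enough (Hsp : spans (fun i => e (skip j i)) m)
    by (specialize (Hmin m (ex_intro (fun e => spans e m) _ Hsp)); lia).
  intro v; destruct (He v) as [a ->].
  set (a' := fun i => a i + - (a j / c j) * c i).
  assert (Ha' : lc e a (S m) = lc e a' (S m)).
  { unfold a'; rewrite lc_add, lc_scal, Hc, ns_scal_zero_r, ns_add_zero; reflexivity. }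
  rewrite Ha', (lc_skip _ _ _ j Hj).
  replace (a' j) with 0 by (unfold a'; field; exact Hcj).
  rewrite ns_scal_zero_l, ns_add_zero_l; eexists; reflexivity.
Qed.

Lemma finite_dimensional_coordinates : finite_dimensional N ->
  exists (n : nat) (nu : (nat -> R) -> R) (K : R) (coord : N -> nat -> R),
    (forall c c', nu (fun i => c i + c' i) <= nu c + nu c') /\
    (forall a c, nu (fun i => a * c i) = Rabs a * nu c) /\
    (forall c, nu c <= K * l1 n c) /\
    (forall c, nu c = 0 -> forall i, (i < n)%nat -> c i = 0) /\
    (forall u v, norm (add u (ns_opp N v)) = nu_dist nu (coord u) (coord v)).
Proof.
  intro HN; destruct (finite_dimensional_basis HN) as (e & n & Hspan & Hindep).
  destruct (choice _ Hspan) as [coord Hcoord].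
  exists n, (fun c => norm (lc e c n)), (l1 n (fun i => norm (e i))), coord.
  split; [|split; [|split; [|split]]].
  - intros; rewrite lc_add; apply ns_norm_triangle.
  - intros; rewrite lc_scal; apply ns_norm_scal.
  - intro c; apply lc_norm_le.
  - intros c Hc; apply Hindep, ns_norm_eq0, Hc.
  - intros u v; unfold nu_dist; f_equal.
    rewrite (Hcoord u) at 1; rewrite (Hcoord v) at 1.
    rewrite ns_opp_scal, <- lc_scal, <- lc_add.
    apply lc_ext; intros; split; auto; ring.
Qed.

End FiniteDimensional.

(** * Finite metric spaces *)

Section SupNorm.
Variables (X : Type) (l : list X).

Definition sup_norm (u : X -> R) : R := fold_right (fun z m => Rmax (Rabs (u z)) m) 0 l.

Lemma sup_norm_ge0 (u : X -> R) : 0 <= sup_norm u.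
Proof.
  unfold sup_norm; induction l as [|a l' IH]; simpl; [lra|].
  eapply Rle_trans; [exact IH | apply Rmax_r].
Qed.

Lemma sup_norm_ge (u : X -> R) (z : X) : In z l -> Rabs (u z) <= sup_norm u.
Proof.
  unfold sup_norm; induction l as [|a l' IH]; simpl; [tauto|]; intros [-> | Hz].
  - apply Rmax_l.
  - eapply Rle_trans; [apply IH, Hz | apply Rmax_r].
Qed.

Lemma sup_norm_le (u : X -> R) (M : R) :
  0 <= M -> (forall z, In z l -> Rabs (u z) <= M) -> sup_norm u <= M.
Proof.
  unfold sup_norm; induction l as [|a l' IH]; simpl; intros HM H; [lra|].
  apply Rmax_lub; auto.
Qed.

Lemma sup_norm_scal (a : R) (u : X -> R) : sup_norm (fun z => a * u z) = Rabs a * sup_norm u.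
Proof.
  unfold sup_norm; induction l as [|b l' IH]; simpl; [ring|].
  rewrite IH, Rabs_mult, RmaxRmult by apply Rabs_pos; reflexivity.
Qed.

Hypothesis l_full : forall x : X, In x l.

Definition linf_space : NormedSpace.
Proof.
  refine {| ns_car := X -> R;
            ns_add := fun u v z => u z + v z;
            ns_zero := fun _ => 0;
            ns_opp := fun u z => - u z;
            ns_scal := fun a u z => a * u z;
            ns_norm := sup_norm |};
    try (intros; apply functional_extensionality; intro; ring).
  - intros u Hu; apply functional_extensionality; intro z.
    pose proof (sup_norm_ge u z (l_full z)); pose proof (Rabs_pos (u z)).
    destruct (Req_dec (u z) 0) as [| Hne]; auto; apply Rabs_no_R0 in Hne; lra.
  - apply sup_norm_scal.
  - intros u v; apply sup_norm_le.
    + pose proof (sup_norm_ge0 u); pose proof (sup_norm_ge0 v); lra.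
    + intros z Hz; eapply Rle_trans; [apply Rabs_triang|].
      pose proof (sup_norm_ge u z Hz); pose proof (sup_norm_ge v z Hz); lra.
Defined.

Definition indicator (eqd : forall x y : X, {x = y} + {x <> y}) (z : X) : linf_space :=
  fun y => if eqd z y then 1 else 0.

Lemma lincomb_indicator_out eqd (v : X -> R) (l' : list X) (y : X) :
  ~ In y l' -> lincomb linf_space (map v l') (map (indicator eqd) l') y = 0.
Proof.
  induction l' as [|a l' IH]; intro Hy; [reflexivity|]; simpl in Hy |- *.
  unfold indicator at 1; destruct (eqd a y); [tauto|].
  simpl in IH; rewrite IH by tauto; ring.
Qed.

Lemma lincomb_indicator_in eqd (v : X -> R) (l' : list X) (y : X) :
  NoDup l' -> In y l' -> lincomb linf_space (map v l') (map (indicator eqd) l') y = v y.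
Proof.
  induction l' as [|a l' IH]; intros Hnd Hy; [destruct Hy|]; simpl in Hy |- *.
  inversion Hnd as [|? ? Ha Hnd']; subst.
  unfold indicator at 1; destruct (eqd a y) as [<- | Hne].
  - pose proof (lincomb_indicator_out eqd v l' a Ha) as H; simpl in H; rewrite H; ring.
  - destruct Hy as [-> | Hy]; [tauto|].
    pose proof (IH Hnd' Hy) as H; simpl in H; rewrite H; ring.
Qed.

Lemma linf_finite_dimensional : finite_dimensional linf_space.
Proof.
  set (eqd := fun x y : X => excluded_middle_informative (x = y)).
  exists (map (indicator eqd) (nodup eqd l)); intro v; exists (map v (nodup eqd l)).
  apply functional_extensionality; intro y; symmetry.
  apply lincomb_indicator_in; [apply NoDup_nodup | apply nodup_In, l_full].
Qed.

End SupNorm.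

Lemma rpow_nonneg_half (t : R) : 0 <= t -> rpow_nonneg t (/ 2) = sqrt t.
Proof.
  intro Ht; unfold rpow_nonneg; destruct (Rle_dec t 0).
  - replace t with 0 by lra; now rewrite sqrt_0.
  - apply Rpower_sqrt; lra.
Qed.

Lemma sqrt_add_le (a b : R) : 0 <= a -> 0 <= b -> sqrt (a + b) <= sqrt a + sqrt b.
Proof.
  intros Ha Hb; pose proof (sqrt_pos a); pose proof (sqrt_pos b).
  apply Rsqr_incr_0_var; [| lra].
  rewrite Rsqr_sqrt by lra; unfold Rsqr.
  pose proof (sqrt_sqrt a Ha); pose proof (sqrt_sqrt b Hb); nra.
Qed.

(* [sqrt d] is again a metric, and on a finite space the Frechet embedding
   [x |-> (z |-> sqrt (d x z))] into [l^oo] is isometric. *)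
Lemma finite_sqrt_metric_embedding (X : Type) (d : X -> X -> R) :
  is_metric d -> finite_type X ->
  exists N : NormedSpace, finite_dimensional N /\
    exists f : X -> N, forall x y, ns_norm N (ns_add N (f x) (ns_opp N (f y))) = sqrt (d x y).
Proof.
  intros (Hd0 & Hd1 & Hdsym & Hdtri) [l Hl].
  assert (Htri : forall x y z, sqrt (d x z) <= sqrt (d x y) + sqrt (d y z)).
  { intros x y z; eapply Rle_trans; [apply sqrt_le_1_alt, Hdtri | apply sqrt_add_le; auto]. }
  exists (linf_space X l Hl); split; [apply linf_finite_dimensional|].
  exists (fun x z => sqrt (d x z)); intros x y; simpl; apply Rle_antisym.
  - apply sup_norm_le; [apply sqrt_pos|]; intros z _; apply Rabs_le.
    pose proof (Htri x y z); pose proof (Htri y x z); rewrite (Hdsym y x) in *; lra.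
  - eapply Rle_trans; [| apply (sup_norm_ge X l _ y (Hl y))]; simpl.
    rewrite (proj2 (Hd1 y y) eq_refl), sqrt_0, Ropp_0, Rplus_0_r; apply RRle_abs.
Qed.

Lemma injective_seq_of_infinite (X : Type) :
  ~ finite_type X -> exists xs : nat -> X, forall a b, a <> b -> xs a <> xs b.
Proof.
  intro Hinf.
  assert (Hnew : forall l : list X, exists x, ~ In x l).
  { intro l; apply NNPP; intro H; apply Hinf; exists l; intro x.
    apply NNPP; intro Hx; apply H; eauto. }
  destruct (choice _ Hnew) as [g Hg].
  (* [xs k] is chosen outside the list of its predecessors *)
  set (prefix := fix prefix k := match k with O => nil | S k => g (prefix k) :: prefix k end).
  exists (fun k => g (prefix k)).
  assert (Hin : forall a b, (a < b)%nat -> In (g (prefix a)) (prefix b))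
    by (intros a b Hab; induction Hab; simpl; auto).
  intros a b Hab E; destruct (Nat.lt_gt_cases a b) as [[H | H] _]; auto.
  - apply (Hg (prefix b)); rewrite <- E; auto.
  - apply (Hg (prefix a)); rewrite E; auto.
Qed.

Theorem corollary2p3 (X : Type) (d : X -> X -> R) (hd : is_metric d) :
  (exists (alpha : R), 0 < alpha < 1 /\
     exists (N : NormedSpace), finite_dimensional N /\
       exists f : X -> N,
         forall x y : X,
           ns_norm N (ns_add N (f x) (ns_opp N (f y))) = rpow_nonneg (d x y) alpha)
  <-> finite_type X.
Proof.
  destruct hd as (Hd0 & Hd1 & Hdsym & Hdtri); split.
  - intros (alpha & Ha & N & HN & f & Hf); apply NNPP; intro Hinf.
    destruct (injective_seq_of_infinite X Hinf) as [xs Hxs].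
    destruct (finite_dimensional_coordinates N HN)
      as (n & nu & K & coord & Hsub & Hhom & Hbound & Hdef & Hdist).
    apply (snowflake_no_separated_seq nu Hsub Hhom n K Hbound Hdef (/ alpha)
             (fun a => exists x, a = coord (f x)) (fun k => coord (f (xs k)))).
    + rewrite <- Rinv_1; apply Rinv_lt_contravar; lra.
    + intros a b c [x ->] [y ->] [z ->].
      rewrite <- !Hdist, !Hf, !rpow_nonneg_inv by (auto; lra); apply Hdtri.
    + intro k; eauto.
    + intros a b Hab; rewrite <- Hdist, Hf, rpow_nonneg_pos; [apply exp_pos|].
      destruct (Hd0 (xs a) (xs b)) as [| Hz]; auto.
      exfalso; apply (Hxs a b Hab), Hd1; auto.
  - intro Hfin; exists (/ 2); split; [lra|].
    destruct (finite_sqrt_metric_embedding X d (conj Hd0 (conj Hd1 (conj Hdsym Hdtri))) Hfin)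
      as (N & HN & f & Hf).
    exists N; split; auto; exists f; intros x y; rewrite rpow_nonneg_half; auto.
Qed.
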